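(* Let $\mathcal{C}$ be an arbitrary linear code of length $n$. For each $i = 1,2,\ldots,d(\mathcal{C})-1$, define $$w_i = \max\left\{\left\lceil \frac{n+1}{i}\right\rceil - 1,\ d(\mathcal{C}^\perp)\right\}.$$ Then $$\rho(\mathcal{C}) \ge \binom{n}{i} \Big/ \left( w_i \binom{n-w_i}{i-1}\right) \quad \text{for } i = 1,2,\ldots,d(\mathcal{C})-1.$$
   Context: A parity-check matrix for a linear code $\mathcal{C}$ (over a finite field) is any matrix (possibly with linearly dependent rows) whose rows span the dual code $\mathcal{C}^\perp$. $d(\mathcal{C})$ and $d(\mathcal{C}^\perp)$ denote the minimum Hamming distances of $\mathcal{C}$ and $\mathcal{C}^\perp$. For a parity-check matrix $H$, the stopping distance $s(H)$ is the largest integer such that for every set of $s(H)-1$ or fewer columns of $H$, the projection of $H$ onto those columns contains at least one row of Hamming weight exactly one. The stopping redundancy $\rho(\mathcal{C})$ is the smallest number of rows of a parity-check matrix $H$ for $\mathcal{C}$ with $s(H) = d(\mathcal{C})$. *)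

(* Linear codes over a finite field F, of length n, are
   represented as row spaces of matrices (mxalgebra). *)
From HB Require Import structures.
From mathcomp Require Import all_boot all_order all_algebra.
Set Implicit Arguments. Unset Strict Implicit. Unset Printing Implicit Defensive.
Import Order.TTheory GRing.Theory Num.Theory.
Local Open Scope ring_scope.

Section Codes.
Variables (F : finFieldType) (n : nat).

Definition wt (v : 'rV[F]_n) : nat := #|[set j : 'I_n | v 0 j != 0]|.

Definition in_code k (C : 'M[F]_(k, n)) (v : 'rV[F]_n) : bool := (v <= C)%MS.

Definition in_dual k (C : 'M[F]_(k, n)) (v : 'rV[F]_n) : bool :=
  [forall c : 'rV[F]_n, (c <= C)%MS ==> (\sum_(j < n) v 0 j * c 0 j == 0)].

(* minimum Hamming distance (= minimum weight of a nonzero word) of the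
   linear code whose membership predicate is P; the zero code gets n.+1
   by convention (it is never used in that case). *)
Definition min_dist (P : pred 'rV[F]_n) : nat :=
  \big[minn/n.+1]_(v : 'rV[F]_n | P v && (v != 0)) wt v.

(* H is a parity-check matrix for C: its rows span the dual code
   (rows may be linearly dependent). *)
Definition is_parity_check k m (C : 'M[F]_(k, n)) (H : 'M[F]_(m, n)) : Prop :=
  forall v : 'rV[F]_n, (v <= H)%MS = in_dual C v.

Definition has_weight_one_row m (H : 'M[F]_(m, n)) (S : {set 'I_n}) : bool :=
  [exists r : 'I_m, #|[set j in S | H r j != 0]| == 1].

Definition stop_prop m (H : 'M[F]_(m, n)) (s : nat) : Prop :=
  forall S : {set 'I_n}, S != set0 -> (#|S| < s)%N -> has_weight_one_row H S.

(* s(H) = s : s is the largest integer with stop_prop H s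
   (stop_prop H is downward closed in s). *)
Definition stopping_distance_is m (H : 'M[F]_(m, n)) (s : nat) : Prop :=
  stop_prop H s /\ ~ stop_prop H s.+1.

Definition ceil_div (a b : nat) : nat := ((a + b - 1) %/ b)%N.

End Codes.

From HB Require Import structures.
From mathcomp Require Import all_boot all_order all_algebra.
From mathcomp Require Import zify.
Import GRing.Theory Num.Theory.
Set Implicit Arguments. Unset Strict Implicit. Unset Printing Implicit Defensive.

(* Since i < d(C) = s(H), every i-subset S of the columns of H is met by the
   support of some row of H in exactly one position.  A row with support of
   size t meets at most t * C(n - t, i - 1) such sets, and t is either 0 or at
   least d(C^perp), since a nonzero row is a nonzero dual codeword.  The map
   t |-> t * C(n - t, i - 1) increases up to floor(n / i) and decreases after
   it, so on these admissible t it is bounded by its value at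
   w_i = max(floor(n / i), d(C^perp)).  Hence C(n, i) <= m * w_i * C(n - w_i, i - 1). *)

HB.instance Definition _ := SemiGroup.isComLaw.Build nat minn minnA minnC.

Lemma bigmin_le_cond (I : finType) (P : pred I) (f : I -> nat) c z :
  P z -> (\big[minn/c]_(v | P v) f v <= f z)%N.
Proof.
by move=> Pz; rewrite (big_rem_AC _ _ _ _ (mem_index_enum z)) Pz geq_minl.
Qed.

Lemma leq_card_bigcup (T : finType) m (X : 'I_m -> {set T}) :
  (#|\bigcup_(r < m) X r| <= \sum_(r < m) #|X r|)%N.
Proof.
elim: m X => [|m IHm] X; first by rewrite big_ord0 cards0.
rewrite !big_ord_recr /=; apply: leq_trans (leq_card_setU _ _).1 _.
by rewrite leq_add2r IHm.
Qed.

Lemma ceil_div_succ_pred n i : (0 < i)%N -> (ceil_div n.+1 i - 1 = n %/ i)%N.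
Proof.
move=> i_gt0; rewrite /ceil_div.
have -> : (n.+1 + i - 1 = 1 * i + n)%N by lia.
by rewrite divnMDl // add1n subn1.
Qed.

Lemma natr_div_le (R : numFieldType) a b m :
  (a <= m * b)%N -> (a%:R / b%:R <= m%:R :> R)%R.
Proof.
move=> le_a_mb; have [->|b_gt0] := posnP b; first by rewrite invr0 mulr0 ler0n.
by rewrite ler_pdivrMr ?ltr0n // -natrM ler_nat.
Qed.

Definition meet_once (T : finType) i (A : {set T}) :=
  [set S : {set T} | (#|S| == i) && (#|S :&: A| == 1)].

Definition meet_once_bound n i t := (t * 'C(n - t, i.-1))%N.

Lemma card_meet_once (T : finType) i (A : {set T}) : (0 < i)%N ->
  (#|meet_once i A| <= meet_once_bound #|T| i #|A|)%N.
Proof.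
move=> i_gt0; pose split_at_A S := (S :&: A, S :\: A).
have split_inj : injective split_at_A.
  by move=> S1 S2 [eq1 eq2]; rewrite -(setID S1 A) -(setID S2 A) eq1 eq2.
rewrite -(card_imset _ split_inj).
have split_sub : split_at_A @: meet_once i A \subset
    setX [set P : {set T} | P \subset A & #|P| == 1]
          [set B : {set T} | B \subset ~: A & #|B| == i.-1].
  apply/subsetP => _ /imsetP[S + ->]; rewrite inE => /andP[/eqP card_S /eqP card_SA].
  rewrite !inE subsetIr card_SA /=; apply/andP; split.
    by apply/subsetP => x; rewrite !inE => /andP[].
  by have := cardsID A S; rewrite card_SA card_S => ?; apply/eqP; lia.
apply: leq_trans (subset_leq_card split_sub) _.
by rewrite cardsX !cards_draws bin1 -[#|~: A|](addKn #|A|) cardsC.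
Qed.

Section MeetOnceBoundUnimodal.
Variables n i : nat.
Hypothesis i_gt0 : (0 < i)%N.
Local Notation g := (meet_once_bound n i).

Lemma mul_bin_sub_succ t :
  ((n - t) * 'C(n - t.+1, i.-1) = (n - t - i.-1) * 'C(n - t, i.-1))%N.
Proof. by rewrite -mul_bin_down; congr (_ * 'C(_, _)); lia. Qed.

Lemma meet_once_bound_step_up t : (t.+1 * i <= n)%N -> (g t <= g t.+1)%N.
Proof.
move=> le_ti_n; rewrite /meet_once_bound.
have t_le_ti : (t <= t * i)%N by rewrite leq_pmulr.
have pos : (0 < n - t - i.-1)%N by nia.
have ratio : ((n - t) * t <= t.+1 * (n - t - i.-1))%N by nia.
rewrite -(leq_pmul2l pos) mulnCA -mul_bin_sub_succ mulnA [X in (_ <= X)%N]mulnCA.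
by rewrite [X in (_ <= X)%N]mulnA [t * (n - t)]mulnC leq_mul.
Qed.

Lemma meet_once_bound_step_down t :
  (t < n)%N -> (n < t.+1 * i)%N -> (g t.+1 <= g t)%N.
Proof.
move=> lt_t_n lt_n_ti; rewrite /meet_once_bound.
have pos : (0 < n - t)%N by lia.
have ratio : (t.+1 * (n - t - i.-1) <= (n - t) * t)%N by nia.
rewrite -(leq_pmul2l pos) mulnCA mul_bin_sub_succ mulnA [X in (_ <= X)%N]mulnA.
exact: leq_mul.
Qed.

Lemma meet_once_bound_homo_up :
  {in [pred t | t <= n %/ i]%N &, {homo g : s t / (s <= t)%N}}.
Proof.
apply: homo_leq_in => [//|s t u|s t|t]; first exact: leq_trans.
  by rewrite !inE => _ ? u /andP[_ ?]; rewrite inE; lia.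
by move=> _; rewrite inE leq_divRL //; exact: meet_once_bound_step_up.
Qed.

Lemma meet_once_bound_homo_down :
  {in [pred t | n %/ i <= t <= n]%N &, {homo g : s t / (s <= t)%N >-> (t <= s)%N}}.
Proof.
apply: homo_leq_in => [//|s t u le_ts le_ut|s t|t]; first exact: leq_trans le_ut le_ts.
  by rewrite !inE => /andP[? _] /andP[_ ?] u /andP[? ?]; rewrite inE; lia.
rewrite !inE => /andP[le_ni_t _] /andP[_ lt_t_n]; apply: meet_once_bound_step_down => //.
by have := ltn_ceil n i_gt0; nia.
Qed.

Lemma meet_once_bound_le_max d t : (t <= n)%N -> ((0 < t)%N -> (d <= t)%N) ->
  (g t <= g (maxn (n %/ i) d))%N.
Proof.
move=> le_t_n le_d_t; have [->//|/le_d_t {}le_d_t] := posnP t.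
have le_ni_n : (n %/ i <= n)%N by rewrite leq_div.
have [le_d_ni|lt_ni_d] := leqP d (n %/ i).
  have [le_t_ni|lt_ni_t] := leqP t (n %/ i).
    by apply: meet_once_bound_homo_up; rewrite ?inE ?leqnn.
  by apply: meet_once_bound_homo_down; rewrite ?inE ?leqnn ?le_ni_n ?le_t_n // ltnW.
apply: meet_once_bound_homo_down; rewrite ?inE ?le_t_n ?andbT //.
- by rewrite ltnW //=; apply: leq_trans le_d_t le_t_n.
- exact: leq_trans (ltnW lt_ni_d) le_d_t.
Qed.

End MeetOnceBoundUnimodal.

Local Open Scope ring_scope.

Definition row_support (F : finFieldType) n m (H : 'M[F]_(m, n)) r :=
  [set j | H r j != 0].

Lemma min_dist_le_wt (F : finFieldType) n (P : pred 'rV[F]_n) v :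
  P v -> v != 0 -> (min_dist P <= wt v)%N.
Proof. by move=> Pv v_neq0; apply: bigmin_le_cond; rewrite Pv v_neq0. Qed.

Lemma wt_row (F : finFieldType) n m (H : 'M[F]_(m, n)) r :
  wt (row r H) = #|row_support H r|.
Proof. by apply: eq_card => j; rewrite !inE mxE. Qed.

Lemma min_dist_dual_le_row_support (F : finFieldType) n k m
    (C : 'M[F]_(k, n)) (H : 'M[F]_(m, n)) r :
  is_parity_check C H -> (0 < #|row_support H r|)%N ->
  (min_dist (in_dual C) <= #|row_support H r|)%N.
Proof.
move=> HC /card_gt0P[j]; rewrite inE => Hrj_neq0.
rewrite -wt_row; apply: min_dist_le_wt; first by rewrite -HC row_sub.
apply: contra_neq Hrj_neq0 => row_eq0.
by have := congr1 (fun v : 'rV_n => v 0 j) row_eq0; rewrite !mxE.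
Qed.

Lemma card_draws_le_meet_once (F : finFieldType) n m (H : 'M[F]_(m, n)) s i :
  (0 < i < s)%N -> stop_prop H s ->
  ('C(n, i) <= \sum_(r < m) #|meet_once i (row_support H r)|)%N.
Proof.
move=> /andP[i_gt0 lt_i_s] stopH.
have cover : [set S : {set 'I_n} | #|S| == i] \subset
    \bigcup_(r < m) meet_once i (row_support H r).
  apply/subsetP => S; rewrite inE => /eqP card_S.
  have /existsP[r one_r] : has_weight_one_row H S.
    by apply: stopH; rewrite ?card_S // -card_gt0 card_S.
  apply/bigcupP; exists r => //; rewrite inE card_S eqxx /=.
  by rewrite (_ : S :&: _ = [set j in S | H r j != 0]) //; apply/setP => j; rewrite !inE.
rewrite -{1}[n]card_ord -card_draws.
exact: leq_trans (subset_leq_card cover) (leq_card_bigcup _).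
Qed.

Theorem theorem5 (F : finFieldType) (n k : nat) (C : 'M[F]_(k, n)) :
  C != 0 ->
  forall i : nat, (1 <= i)%N -> (i <= min_dist (in_code C) - 1)%N ->
  let w := maxn (ceil_div n.+1 i - 1) (min_dist (in_dual C)) in
  forall (m : nat) (H : 'M[F]_(m, n)),
    is_parity_check C H ->
    stopping_distance_is H (min_dist (in_code C)) ->
    ('C(n, i)%:R / (w%:R * 'C(n - w, i.-1)%:R) : rat) <= m%:R.
Proof.
move=> _ i i_gt0 le_i_d w m H HC [stopH _].
have w_eq : w = maxn (n %/ i) (min_dist (in_dual C)) by rewrite /w ceil_div_succ_pred.
have row_bound r : (#|meet_once i (row_support H r)| <= meet_once_bound n i w)%N.
  apply: leq_trans (card_meet_once _ i_gt0) _; rewrite card_ord w_eq.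
  apply: meet_once_bound_le_max => //; last exact: min_dist_dual_le_row_support.
  by rewrite -[n in (_ <= n)%N]card_ord max_card.
rewrite -natrM; apply: natr_div_le.
apply: leq_trans (card_draws_le_meet_once _ stopH) _; first by apply/andP; split; lia.
by rewrite -[m in (m * _)%N]card_ord -sum_nat_const leq_sum.
Qed.
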